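(* For every positive integer $n$, \[ {}_{H}w_{n}(x)=\sum_{l=0}^{n}\sum_{k=1}^{n}\sum_{j=0}^{k}\frac{(-1)^{k+1}}{k}\binom{n}{l}\genfrac{\{}{\}}{0pt}{}{n-l}{k}\genfrac{[}{]}{0pt}{}{k+1}{j+1}\,w_{l+j}(x)\left(\frac{x}{1+x}\right)^{k}. \]
   Context: $\genfrac{\{}{\}}{0pt}{}{n}{k}$ denotes the Stirling numbers of the second kind and $\genfrac{[}{]}{0pt}{}{n}{k}$ the unsigned Stirling numbers of the first kind. The geometric polynomials are $w_n(x)=\sum_{k=0}^{n}\genfrac{\{}{\}}{0pt}{}{n}{k}k!\,x^k$ (so $w_0(x)=1$). With $H_k=\sum_{i=1}^k 1/i$ the harmonic numbers, the harmonic geometric polynomials are ${}_{H}w_n(x)=\sum_{k=1}^{n}\genfrac{\{}{\}}{0pt}{}{n}{k}k!\,H_k\,x^k$ (so ${}_Hw_0(x)=0$). *)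

From mathcomp Require Import all_boot all_order all_algebra.
Set Implicit Arguments. Unset Strict Implicit. Unset Printing Implicit Defensive.
Import Order.TTheory GRing.Theory Num.Theory.
Local Open Scope ring_scope.

Fixpoint stirling2 (n k : nat) : nat :=
  match n, k with
  | 0, 0 => 1
  | 0, _.+1 => 0
  | _.+1, 0 => 0
  | n'.+1, k'.+1 => (k'.+1 * stirling2 n' k + stirling2 n' k')%N
  end.

Fixpoint stirling1 (n k : nat) : nat :=
  match n, k with
  | 0, 0 => 1
  | 0, _.+1 => 0
  | _.+1, 0 => 0
  | n'.+1, k'.+1 => (n' * stirling1 n' k + stirling1 n' k')%N
  end.

Definition harmonic (R : numFieldType) (k : nat) : R :=
  \sum_(1 <= i < k.+1) (i%:R)^-1.

Definition geom_poly (R : numFieldType) (n : nat) (x : R) : R :=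
  \sum_(0 <= k < n.+1) (stirling2 n k)%:R * (k`!)%:R * x ^+ k.

Definition hgeom_poly (R : numFieldType) (n : nat) (x : R) : R :=
  \sum_(1 <= k < n.+1) (stirling2 n k)%:R * (k`!)%:R * harmonic R k * x ^+ k.

(* Writing H_k = sum_(m < k) (-1)^m / (m + 1) * C(k, m + 1) reduces the theorem
   to showing that, for every M, the double sum over l and j, multiplied by
   (x / (1 + x))^M, equals T_M = sum_k C(k, M) {n, k} k! x^k.
   Let L be the linear functional X^r |-> w_r(x).  Since X^r = sum_k {r, k} X^(k),
   with X^(k) the falling factorial, L maps X^(q) to q! x^q.  The double sum is
   L(E_(n,M) * (X + 1)...(X + M)) where E_(n,M) = sum_l C(n, l) {n - l, M} X^l,
   the coefficients of (X + 1)...(X + M) being Stirling numbers of the first kind.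
   Both E_(n,M) and sum_q {n, q + M} C(q + M, M) X^(q) satisfy the recurrence
   P_(n+1,M) = (X + M) P_(n,M) + P_(n,M-1), so they coincide; and
   X^(q) (X + M + 1) = X^(q+1) + (q + M + 1) X^(q) gives, by induction on M,
   L(X^(q) (X + 1)...(X + M)) = (q + M)! x^q (1 + x)^M. *)

From HB Require Import structures.
From mathcomp Require Import all_boot all_order all_algebra.
From mathcomp Require Import ring zify.
Import Order.TTheory GRing.Theory Num.Theory.
Set Implicit Arguments. Unset Strict Implicit. Unset Printing Implicit Defensive.
Local Open Scope ring_scope.

Lemma stirling2S n m : stirling2 n.+1 m =
  (m * stirling2 n m + (if m is m'.+1 then stirling2 n m' else 0))%N.
Proof. by case: m => [|m] //=; rewrite muln0. Qed.

Lemma stirling2_small n m : (n < m)%N -> stirling2 n m = 0%N.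
Proof. by elim: n m => [|n IH] [|m] //= lt_nm; rewrite !IH ?muln0 // ltnW. Qed.

Lemma stirling1_small n m : (n < m)%N -> stirling1 n m = 0%N.
Proof. by elim: n m => [|n IH] [|m] //= lt_nm; rewrite !IH ?muln0 // ltnW. Qed.

Lemma binomial_stirling2S n m l :
  ('C(n.+1, l) * stirling2 (n.+1 - l) m =
   (if l is l'.+1 then 'C(n, l') * stirling2 (n - l') m else 0)
   + m * ('C(n, l) * stirling2 (n - l) m)
   + (if m is m'.+1 then 'C(n, l) * stirling2 (n - l) m' else 0))%N.
Proof.
case: l => [|l].
  by rewrite !subn0 !bin0 stirling2S; case: m => [|m]; lia.
rewrite subSS binS; case: (ltnP l n) => [lt_ln|le_nl].
  have -> : (n - l = (n - l.+1).+1)%N by lia.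
  by rewrite stirling2S; case: m => [|m]; lia.
by rewrite (bin_small (n := n) (m := l.+1)) ?ltnS //; case: m => [|m]; lia.
Qed.

Lemma stirling2S_binomial n q m :
  (stirling2 n.+1 (q + m) * 'C(q + m, m) =
   (if q is q'.+1 then stirling2 n (q' + m) * 'C(q' + m, m) else 0)
   + stirling2 n (q + m) * 'C(q + m, m) * (q + m)
   + (if m is m'.+1 then stirling2 n (q + m') * 'C(q + m', m') else 0))%N.
Proof.
rewrite stirling2S.
by case: q => [|q]; case: m => [|m];
  rewrite ?addn0 ?add0n ?addSn ?addnS ?binn ?bin0 ?binS /=; lia.
Qed.

Lemma sum_ord_delta (R : nzSemiRingType) N q (F : nat -> R) : (q < N)%N ->
  \sum_(k < N) ((k : nat) == q)%:R * F k = F q.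
Proof.
move=> lt_qN; rewrite (bigD1 (Ordinal lt_qN)) //= eqxx mul1r big1 ?addr0 // => k.
by rewrite -val_eqE /= => /negbTE ->; rewrite mul0r.
Qed.

Lemma sum_ord_support (V : nmodType) a b (F : nat -> V) :
  (a <= b)%N -> (forall k, (a <= k)%N -> F k = 0) ->
  \sum_(k < a) F k = \sum_(k < b) F k.
Proof.
move=> le_ab F_out; rewrite -(subnKC le_ab) big_split_ord /=.
by rewrite [X in _ = _ + X]big1 ?addr0 // => i _; rewrite F_out // leq_addr.
Qed.

Lemma sum_ord_shift (V : nmodType) n m (F : nat -> V) :
  (forall k, (k < m)%N -> F k = 0) -> (forall k, (n < k)%N -> F k = 0) ->
  \sum_(k < n.+1) F k = \sum_(q < n.+1) F (q + m)%N.
Proof.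
move=> F_lo F_hi; rewrite (sum_ord_support (b := n.+1 + m)) ?leq_addr //.
rewrite addnC big_split_ord /= big1 ?add0r => [|i _]; last exact: F_lo.
by apply: eq_bigr => q _; rewrite addnC.
Qed.

Lemma poly_expand (R : nzSemiRingType) (p : {poly R}) a :
  (size p <= a)%N -> p = \sum_(i < a) p`_i *: 'X^i.
Proof.
move=> le_pa; rewrite -poly_def; apply/polyP => i; rewrite coef_poly.
by case: ltnP => // le_ai; apply: (leq_sizeP _ _ le_pa); apply: leq_trans le_ai.
Qed.

Section FallingRising.
Variable R : comNzRingType.

Definition falling q : {poly R} := \prod_(i < q) ('X - i%:R%:P).

Definition shifted_rising m : {poly R} := \prod_(i < m) ('X + i.+1%:R%:P).

Lemma fallingS q : falling q.+1 = falling q * ('X - q%:R%:P).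
Proof. by rewrite /falling big_ord_recr. Qed.

Lemma shifted_risingS m : shifted_rising m.+1 = shifted_rising m * ('X + m.+1%:R%:P).
Proof. by rewrite /shifted_rising big_ord_recr. Qed.

Lemma falling_mulXnat q m :
  falling q * ('X + m%:R%:P) = falling q.+1 + (q + m)%:R *: falling q.
Proof.
rewrite fallingS -mul_polyC (mulrC _%:P) -mulrDr; congr (_ * _).
by rewrite -addrA -polyCN -polyCD natrD addKr.
Qed.

Lemma coef_shifted_rising m j : (shifted_rising m)`_j = (stirling1 m.+1 j.+1)%:R.
Proof.
elim: m j => [|m IH] j; first by rewrite /shifted_rising big_ord0 coef1; case: j.
rewrite shifted_risingS mulrDr coefD coefMX coefMC.
case: j => [|j]; first by rewrite eqxx add0r IH /= addn0 natrM mulrC.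
by rewrite !IH /= -natrM -natrD addnC mulnC.
Qed.

Lemma size_shifted_rising m : (size (shifted_rising m) <= m.+1)%N.
Proof.
by apply/leq_sizeP => j le_mj; rewrite coef_shifted_rising stirling1_small.
Qed.

Lemma sum_coef_falling_stirling2 q N i : (q <= N)%N ->
  \sum_(r < N.+1) (falling q)`_r * (stirling2 r i)%:R = (i == q)%:R.
Proof.
elim: q N i => [|q IH] N i le_qN.
  rewrite /falling big_ord0 big_ord_recl coef1 eqxx mul1r big1 ?addr0 => [|j _].
    by case: i.
  by rewrite coef1 mul0r.
case: N le_qN => [//|N] lt_qN.
have sum_coefMX (p : {poly R}) (g : nat -> R) :
    \sum_(r < N.+2) (p * 'X)`_r * g r = \sum_(r < N.+1) p`_r * g r.+1.
  rewrite big_ord_recl coefMX eqxx mul0r add0r.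
  by apply: eq_bigr => r _; rewrite coefMX.
rewrite fallingS mulrBr.
under eq_bigr do rewrite coefB coefMC mulrBl.
rewrite sumrB (sum_coefMX _ (fun r => (stirling2 r i)%:R)).
under [X in _ - X = _]eq_bigr do rewrite -mulrA (mulrC q%:R) mulrA.
rewrite -mulr_suml (IH N.+1) ?(ltnW lt_qN) //.
under eq_bigr do rewrite stirling2S natrD natrM mulrDr mulrA (mulrC _ i%:R) -mulrA.
rewrite big_split /= -mulr_sumr.
case: i => [|i].
  rewrite mul0r add0r big1; last by move=> j _; rewrite mulr0.
  by case: q {IH lt_qN} => [|q]; rewrite /= ?mul0r ?mulr0 ?subr0.
rewrite (IH N i lt_qN) (IH N i.+1 lt_qN).
case: (eqVneq i.+1 q) => [<-|_].
  by rewrite mulr1 mul1r addrAC subrr add0r eqSS.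
by rewrite /= !mulr0n mulr0 mul0r add0r subr0 eqSS.
Qed.

End FallingRising.

Section GeomEval.
Variables (R : numFieldType) (x : R) (N : nat).

(* The functional L of the sketch above, blind to coefficients of degree >= [N]. *)
Definition geom_eval (p : {poly R}) : R := \sum_(r < N) p`_r * geom_poly r x.

Lemma geom_eval_is_linear : scalar geom_eval.
Proof.
move=> c p q; rewrite /geom_eval mulr_sumr -big_split /=.
by apply: eq_bigr => r _; rewrite coefD coefZ mulrDl mulrA.
Qed.

HB.instance Definition _ :=
  GRing.isLinear.Build R {poly R} R *%R geom_eval geom_eval_is_linear.

Lemma geom_eval_Xn r : (r < N)%N -> geom_eval 'X^r = geom_poly r x.
Proof.
move=> lt_rN; rewrite /geom_eval.
by under eq_bigr do rewrite coefXn; exact: (sum_ord_delta (fun k => geom_poly k x)).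
Qed.

Lemma geom_eval_mul (p q : {poly R}) a b :
  (size p <= a)%N -> (size q <= b)%N -> (a + b <= N.+1)%N ->
  geom_eval (p * q) =
  \sum_(l < a) \sum_(j < b) p`_l * q`_j * geom_poly (l + j) x.
Proof.
move=> le_pa le_qb le_abN.
rewrite [in LHS](poly_expand le_pa) [in LHS](poly_expand le_qb).
rewrite mulr_suml linear_sum.
apply: eq_bigr => l _; rewrite mulr_sumr linear_sum; apply: eq_bigr => j _.
rewrite -scalerAl -scalerAr scalerA -exprD linearZ /= geom_eval_Xn //.
by have := ltn_ord l; have := ltn_ord j; lia.
Qed.

Lemma geom_polyE r : (r < N)%N ->
  geom_poly r x = \sum_(k < N) (stirling2 r k)%:R * (k`!)%:R * x ^+ k.
Proof.
move=> lt_rN; rewrite /geom_poly big_mkord.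
apply: (sum_ord_support (F := fun k => (stirling2 r k)%:R * (k`!)%:R * x ^+ k)) => // k lt_rk.
by rewrite stirling2_small // !mul0r.
Qed.

Lemma geom_eval_falling q : (q < N)%N -> geom_eval (falling R q) = (q`!)%:R * x ^+ q.
Proof.
move=> lt_qN; rewrite /geom_eval.
under eq_bigr => r _ do rewrite (geom_polyE (ltn_ord r)) mulr_sumr.
rewrite exchange_big /= -(sum_ord_delta (fun k => (k`!)%:R * x ^+ k) lt_qN).
apply: eq_bigr => k _; case: N lt_qN k => [//|N'] lt_qN' k.
rewrite -(@sum_coef_falling_stirling2 R q N' k lt_qN') mulr_suml.
by apply: eq_bigr => r _; rewrite !mulrA.
Qed.

Lemma geom_eval_falling_rising q m : (q + m < N)%N ->
  geom_eval (falling R q * shifted_rising R m) = ((q + m)`!)%:R * x ^+ q * (1 + x) ^+ m.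
Proof.
elim: m q => [|m IH] q lt_qmN.
  rewrite addn0 in lt_qmN *.
  by rewrite /shifted_rising big_ord0 mulr1 geom_eval_falling // expr0 mulr1.
have lt_q1m : (q.+1 + m < N)%N by rewrite addSnnS.
have lt_qm : (q + m < N)%N by apply: leq_ltn_trans lt_qmN; rewrite leq_add2l.
rewrite shifted_risingS mulrA mulrAC falling_mulXnat mulrDl -scalerAl.
rewrite linearD linearZ /= !IH // addSnnS addnS factS natrM !exprS; ring.
Qed.

End GeomEval.

Section StirlingPolynomials.
Variable R : comNzRingType.

Fixpoint binom_stirling_poly n m : {poly R} :=
  if n is n'.+1 then
    ('X + m%:R%:P) * binom_stirling_poly n' m
    + (if m is m'.+1 then binom_stirling_poly n' m' else 0)
  else (stirling2 0 m)%:R%:P.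

Lemma coef_binom_stirling_poly n m l :
  (binom_stirling_poly n m)`_l = ('C(n, l) * stirling2 (n - l) m)%:R.
Proof.
elim: n m l => [|n IH] m l; first by rewrite /= coefC; case: l => [|l] //=; rewrite mul1n.
rewrite /= binomial_stirling2S mulrDl !coefD coefXM coefCM.
case: m => [|m]; case: l => [|l];
  rewrite ?coef0 ?addr0 ?IH /= ?natrD ?natrM ?mul0r ?add0r ?addr0 //; ring.
Qed.

Lemma size_binom_stirling_poly n m : (size (binom_stirling_poly n m) <= n.+1)%N.
Proof.
by apply/leq_sizeP => l lt_nl; rewrite coef_binom_stirling_poly bin_small.
Qed.

Definition stirling_falling_poly n m : {poly R} :=
  \sum_(q < n.+1) (stirling2 n (q + m) * 'C(q + m, m))%:R *: falling R q.

Lemma stirling_falling_polyS n m :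
  stirling_falling_poly n.+1 m = ('X + m%:R%:P) * stirling_falling_poly n m
    + (if m is m'.+1 then stirling_falling_poly n m' else 0).
Proof.
rewrite /stirling_falling_poly.
under eq_bigr do rewrite stirling2S_binomial !natrD natrM !scalerDl.
rewrite !big_split /= big_ord_recl scale0r add0r.
rewrite [X in _ + X + _]big_ord_recr [X in _ + X = _]big_ord_recr /=.
have out k : stirling2 n (n.+1 + k) = 0%N by rewrite stirling2_small // ltnS leq_addr.
rewrite out mul0n mul0r scale0r addr0.
rewrite [X in _ + (_ + X) = _](_ : _ = 0) ?addr0; last first.
  by case: m => [|m]; rewrite ?out ?mul0n scale0r.
congr (_ + _).
  rewrite mulr_sumr -big_split /=; apply: eq_bigr => q _.
  rewrite -scalerAr (mulrC _ (falling R q)) falling_mulXnat scalerDr scalerA.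
  by rewrite /bump /= add1n.
by case: m => [|m] //; rewrite big1 // => q _; rewrite mulr0n scale0r.
Qed.

Lemma binom_stirling_poly_falling n m :
  binom_stirling_poly n m = stirling_falling_poly n m.
Proof.
elim: n m => [|n IH] m.
  by rewrite /stirling_falling_poly big_ord1 /= binn muln1 /falling big_ord0 alg_polyC.
by rewrite stirling_falling_polyS /= IH; case: m => [|m] //; rewrite IH.
Qed.

End StirlingPolynomials.

Lemma sum_alternating_binomial (R : pzRingType) k :
  \sum_(m < k.+1) (-1) ^+ m * ('C(k.+1, m.+1))%:R = 1 :> R.
Proof.
have := exprD1n (-1 : R) k.+1.
rewrite addNr expr0n /= big_ord_recl /= expr0 bin0 mulr1n.
move/eqP; rewrite eq_sym addr_eq0 => /eqP sum_eq.
rewrite [RHS]sum_eq -sumrN; apply: eq_bigr => i _.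
by rewrite /bump /= add1n exprS mulN1r mulr_natr mulNrn opprK.
Qed.

Lemma harmonic_alternating_binomial (R : numFieldType) k :
  harmonic R k = \sum_(m < k) (-1) ^+ m / (m.+1)%:R * ('C(k, m.+1))%:R.
Proof.
elim: k => [|k IH]; first by rewrite /harmonic big_geq // big_ord0.
rewrite /harmonic big_nat_recr //= -/(harmonic R k) IH.
under [RHS]eq_bigr do rewrite binS natrD mulrDr.
rewrite big_split /= big_ord_recr /= bin_small // mulr0 addr0; congr (_ + _).
transitivity ((k.+1)%:R^-1 * \sum_(m < k.+1) (-1) ^+ m * ('C(k.+1, m.+1))%:R : R).
  by rewrite sum_alternating_binomial mulr1.
rewrite mulr_sumr; apply: eq_bigr => i _.
have i1_neq0 : (i.+1)%:R != 0 :> R by rewrite pnatr_eq0.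
have := congr1 (fun t => t%:R : R) (mul_bin_diag k.+1 i).
rewrite !natrM => /esym/(canRL (mulKf i1_neq0)) ->.
by rewrite /=; field; rewrite !(addrC 1) !natr1 !pnatr_eq0.
Qed.

Lemma harmonic_alternating_binomial_widen (R : numFieldType) k N : (k <= N)%N ->
  harmonic R k = \sum_(m < N) (-1) ^+ m / (m.+1)%:R * ('C(k, m.+1))%:R.
Proof.
move=> le_kN; rewrite harmonic_alternating_binomial.
apply: (sum_ord_support (F := fun m => (-1) ^+ m / (m.+1)%:R * ('C(k, m.+1))%:R)) => // m le_km.
by rewrite bin_small ?ltnS // mulr0.
Qed.

Section GeomTaylor.
Variables (R : numFieldType) (x : R).

(* [x^M / M!] times the [M]-th derivative of [w_n] at [x]. *)
Definition geom_taylor n M : R :=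
  \sum_(k < n.+1) ('C(k, M))%:R * (stirling2 n k)%:R * (k`!)%:R * x ^+ k.

Lemma sum_binom_stirling_geom n m :
  \sum_(0 <= l < n.+1) \sum_(0 <= j < m.+1)
    ('C(n, l))%:R * (stirling2 (n - l) m)%:R * (stirling1 m.+1 j.+1)%:R * geom_poly (l + j) x
  = \sum_(q < n.+1)
      (stirling2 n (q + m) * 'C(q + m, m))%:R * ((q + m)`!%:R * x ^+ q * (1 + x) ^+ m).
Proof.
pose N := (n + m).+1.
transitivity (geom_eval x N (binom_stirling_poly R n m * shifted_rising R m)).
  have le_N : (n.+1 + m.+1 <= N.+1)%N by rewrite addnS.
  rewrite (geom_eval_mul x (size_binom_stirling_poly _ _ _) (size_shifted_rising _ _) le_N).
  rewrite big_mkord; apply: eq_bigr => l _; rewrite big_mkord; apply: eq_bigr => j _.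
  by rewrite coef_binom_stirling_poly coef_shifted_rising natrM.
rewrite binom_stirling_poly_falling /stirling_falling_poly mulr_suml linear_sum.
apply: eq_bigr => q _; rewrite -scalerAl linearZ /= geom_eval_falling_rising //.
by rewrite ltnS leq_add2r -ltnS.
Qed.

Lemma sum_binom_stirling_geom_taylor n m : 1 + x != 0 ->
  \sum_(0 <= l < n.+1) \sum_(0 <= j < m.+1)
    ('C(n, l))%:R * (stirling2 (n - l) m)%:R * (stirling1 m.+1 j.+1)%:R
      * geom_poly (l + j) x * (x / (1 + x)) ^+ m
  = geom_taylor n m.
Proof.
move=> x1_neq0.
under eq_bigr do rewrite -mulr_suml.
pose G k := ('C(k, m))%:R * (stirling2 n k)%:R * (k`!)%:R * x ^+ k.
rewrite -mulr_suml sum_binom_stirling_geom mulr_suml /geom_taylor (sum_ord_shift (F := G) (m := m)).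
- apply: eq_bigr => q _; rewrite /G expr_div_n exprD natrM.
  by field; exact: expf_neq0.
- by move=> k lt_km; rewrite /G bin_small // !mul0r.
- by move=> k lt_nk; rewrite /G stirling2_small // mulr0 !mul0r.
Qed.

Lemma hgeom_poly_taylor n :
  hgeom_poly n x = \sum_(m < n) (-1) ^+ m / (m.+1)%:R * geom_taylor n m.+1.
Proof.
rewrite /geom_taylor; under eq_bigr do rewrite mulr_sumr.
rewrite exchange_big /= big_ord_recl big1 ?add0r => [|m _]; last first.
  by rewrite bin0n !mul0r mulr0.
rewrite /hgeom_poly big_add1 big_mkord; apply: eq_bigr => k _.
rewrite (harmonic_alternating_binomial_widen _ (ltn_ord k)) mulr_sumr mulr_suml.
by apply: eq_bigr => m _; rewrite /bump /=; ring.
Qed.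

End GeomTaylor.

Theorem theorem1 (R : numFieldType) (n : nat) (x : R) :
  (0 < n)%N -> 1 + x != 0 ->
  hgeom_poly n x =
  \sum_(0 <= l < n.+1) \sum_(1 <= k < n.+1) \sum_(0 <= j < k.+1)
    ((-1) ^+ k.+1 / k%:R) * ('C(n, l))%:R * (stirling2 (n - l) k)%:R
      * (stirling1 k.+1 j.+1)%:R * geom_poly (l + j) x * (x / (1 + x)) ^+ k.
Proof.
(* The identity also holds for [n = 0], where both sides vanish. *)
move=> _ x1_neq0.
rewrite hgeom_poly_taylor exchange_big_nat big_add1 big_mkord.
apply: eq_bigr => m _; rewrite -sum_binom_stirling_geom_taylor // mulr_sumr.
apply: eq_bigr => l _; rewrite mulr_sumr; apply: eq_bigr => j _.
by rewrite !exprS !mulN1r opprK !mulrA.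
Qed.
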